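(* For $n\ge 1$, $\left|\Pi_n\wr C_2(1^12^1,1^22^1)\right|=2^n+n-1$.
   Context: For $n\ge0$ let $[n]=\{1,\dots,n\}$. A $2$-colored set partition of $[n]$ is a set partition of $[n]$ together with an assignment of a color from $\{1,2\}$ to each element; $\Pi_n\wr C_2$ is the set of these. For a set $S$ of patterns, $\Pi_n\wr C_2(S)$ is the set of such colored partitions avoiding every pattern in $S$ in the pattern sense. For the two patterns used here: $\sigma$ contains $1^12^1$ iff there are two elements in different blocks with the same color; $\sigma$ contains $1^22^1$ iff there are $i<j$ in different blocks with $i$ colored $2$ and $j$ colored $1$. *)

From mathcomp Require Import all_boot.
Set Implicit Arguments. Unset Strict Implicit. Unset Printing Implicit Defensive.

(* The ground set [n] = {1,...,n} is modelled by 'I_n = {0,...,n-1}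
   (element k+1 of [n] is the ordinal with value k; order is preserved). *)

Definition color1 : 'I_2 := ord0.
Definition color2 : 'I_2 := ord_max.

Definition colored_partition (n : nat) :=
  ({set {set 'I_n}} * {ffun 'I_n -> 'I_2})%type.

Definition is_colored_partition n (s : colored_partition n) : bool :=
  partition s.1 [set: 'I_n].

Definition contains_1121 n (s : colored_partition n) : bool :=
  [exists i : 'I_n, exists j : 'I_n,
     (pblock s.1 i != pblock s.1 j) && (s.2 i == s.2 j)].

Definition contains_1221 n (s : colored_partition n) : bool :=
  [exists i : 'I_n, exists j : 'I_n,
     [&& (i < j)%N, pblock s.1 i != pblock s.1 j,
         s.2 i == color2 & s.2 j == color1]].

Definition avoiders n : {set colored_partition n} :=
  [set s : colored_partition n | [&& is_colored_partition s,
                                     ~~ contains_1121 s & ~~ contains_1221 s]].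

From mathcomp Require Import all_boot zify.
Set Implicit Arguments. Unset Strict Implicit. Unset Printing Implicit Defensive.

(* Avoiding 1^1 2^1 forces elements of different blocks to have different
   colors, so with two colors there are at most two blocks. A one-block
   partition avoids both patterns whatever its coloring (2^n of them).
   With two blocks each block is monochromatic and the blocks are the two
   color classes; avoiding 1^2 2^1 then forces the color-1 class to be a
   proper nonempty initial segment [0, k), which leaves n - 1 choices. *)

Lemma eq_color_of_neq (a b d : 'I_2) : a != d -> b != d -> a = b.
Proof.
by case: a b d => [[|[|?]] ?] [[|[|?]] ?] [[|[|?]] ?] //= _ _; apply: val_inj.
Qed.

Lemma neq_color2 (a : 'I_2) : a != color2 -> a = color1.
Proof. by move/eq_color_of_neq; apply. Qed.

Lemma neq_color1 (a : 'I_2) : a != color1 -> a = color2.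
Proof. by move/eq_color_of_neq; apply. Qed.

Section PartitionByPblock.

Variable T : finType.

Lemma eq_partition_pblock (D : {set T}) (P Q : {set {set T}}) :
    partition P D -> partition Q D ->
    {in D &, forall x y, (pblock P x == pblock P y) = (pblock Q x == pblock Q y)} ->
  P = Q.
Proof.
move=> partP partQ eqPQ.
rewrite -(preim_partition_pblock partP) -(preim_partition_pblock partQ).
apply: eq_in_imset => x Dx; apply/setP => y; rewrite !inE.
by apply: andb_id2l => Dy; apply: eqPQ.
Qed.

Lemma pblock_preim_partition (rT : eqType) (f : T -> rT) (D : {set T}) :
  {in D &, forall x y,
    (pblock (preim_partition f D) x == pblock (preim_partition f D) y) = (f x == f y)}.
Proof.
move=> x y Dx Dy; have [/eqP covD tiP _] := and3P (preim_partitionP f D).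
rewrite eq_pblock ?covD //.
by apply: pblock_equivalence_partition => // ? ? ? _ _ _; split=> // /eqP->.
Qed.

Lemma partition_set1T (x : T) : partition [set [set: T]] [set: T].
Proof.
rewrite /partition cover1 trivIset1 eqxx inE /=.
by apply/eqP => /setP/(_ x); rewrite !inE.
Qed.

Lemma pblock_set1T (x : T) : pblock [set [set: T]] x = [set: T].
Proof. by apply: def_pblock; rewrite ?trivIset1 ?inE. Qed.

End PartitionByPblock.

Definition threshold_coloring n (k : nat) : {ffun 'I_n -> 'I_2} :=
  [ffun i : 'I_n => if (i < k)%N then color1 else color2].

Definition split_partition n (k : nat) : {set {set 'I_n}} :=
  preim_partition (threshold_coloring n k) [set: 'I_n].

Lemma threshold_coloring_inj n : injective (fun k : 'I_n => threshold_coloring n k).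
Proof.
move=> a b /ffunP eq_ab; apply: val_inj.
by case: (ltngtP a b) => // lt_ab; [have := eq_ab a | have := eq_ab b];
  rewrite !ffunE ltnn lt_ab.
Qed.

Lemma threshold_of_monotone n (c : {ffun 'I_n -> 'I_2}) (w : 'I_n) :
    c w = color2 ->
    (forall i j : 'I_n, (i < j)%N -> c i = color2 -> c j != color1) ->
  exists k : 'I_n, c = threshold_coloring n k.
Proof.
move=> cw mono.
have [k /eqP ck kmin] := @arg_minnP _ w (fun i => c i == color2) val (introT eqP cw).
exists k; apply/ffunP => i; rewrite ffunE; case: ifPn => [ik | ].
  by apply: neq_color2; apply/negP => /kmin; rewrite leqNgt ik.
case: (ltngtP k i) => [ki | // | /val_inj <- //] _.
by apply: neq_color1; apply: mono ki ck.
Qed.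

Lemma one_block_avoider n (c : {ffun 'I_n -> 'I_2}) (x : 'I_n) :
  (([set [set: 'I_n]], c) : colored_partition n) \in avoiders n.
Proof.
rewrite inE /is_colored_partition /contains_1121 /contains_1221 /=.
rewrite (partition_set1T x) /=.
by apply/andP; split; apply/negP => /existsP[i /existsP[j]]; rewrite !pblock_set1T eqxx /= ?andbF.
Qed.

Lemma split_avoider n (k : nat) :
  ((split_partition n k, threshold_coloring n k) : colored_partition n) \in avoiders n.
Proof.
rewrite inE /is_colored_partition /contains_1121 /contains_1221 /=.
rewrite preim_partitionP /=; apply/andP; split.
  by apply/negP => /existsP[i /existsP[j]]; rewrite pblock_preim_partition ?inE // andNb.
apply/negP => /existsP[i /existsP[j /and4P[ij _]]]; rewrite !ffunE.
by case: ifP; case: ifP => //; lia.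
Qed.

Section TwoBlockAvoider.

Variables (n : nat) (P : {set {set 'I_n}}) (c : {ffun 'I_n -> 'I_2}).
Hypotheses (partP : partition P [set: 'I_n])
  (no1121 : ~~ contains_1121 ((P, c) : colored_partition n))
  (no1221 : ~~ contains_1221 ((P, c) : colored_partition n)).
Variables (u v : 'I_n).
Hypothesis uv : pblock P u != pblock P v.

Lemma color_neq_of_pblock_neq (i j : 'I_n) : pblock P i != pblock P j -> c i != c j.
Proof.
move=> pij; apply: contraNN no1121 => cij.
by apply/existsP; exists i; apply/existsP; exists j; rewrite /= pij cij.
Qed.

Lemma pblock_eq_color (i j : 'I_n) : (pblock P i == pblock P j) = (c i == c j).
Proof.
apply/idP/idP => [/eqP pij | ]; last by apply: contraTT; apply: color_neq_of_pblock_neq.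
have [z zi] : exists z, pblock P i != pblock P z.
  case: (eqVneq (pblock P i) (pblock P u)) => [iu | ]; last by exists u.
  by exists v; rewrite iu.
by apply/eqP/(@eq_color_of_neq _ _ (c z)); apply: color_neq_of_pblock_neq; rewrite -?pij.
Qed.

Lemma monotone_coloring (i j : 'I_n) : (i < j)%N -> c i = color2 -> c j != color1.
Proof.
move=> ij ci; apply/eqP => cj; move/negP: no1221; apply.
by apply/existsP; exists i; apply/existsP; exists j; rewrite /= ij pblock_eq_color ci cj.
Qed.

Lemma two_block_avoider_split :
  exists2 k : 'I_n, (0 < k)%N & (P, c) = (split_partition n k, threshold_coloring n k).
Proof.
have cuv := color_neq_of_pblock_neq uv.
have [w cw] : exists w, c w = color2.
  case: (eqVneq (c u) color2) => [|/neq_color2 cu]; first by exists u.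
  by exists v; apply: neq_color1; rewrite -cu eq_sym.
have [x cx] : exists x, c x = color1.
  case: (eqVneq (c u) color1) => [|/neq_color1 cu]; first by exists u.
  by exists v; apply: neq_color2; rewrite -cu eq_sym.
have [k ck] := threshold_of_monotone cw monotone_coloring.
exists k.
  by move: cx; rewrite ck ffunE; case: ifP => // xk _; apply: leq_ltn_trans xk.
rewrite -ck; congr pair.
apply: eq_partition_pblock partP (preim_partitionP _ _) _ => i j _ _.
by rewrite pblock_eq_color pblock_preim_partition ?inE // ck.
Qed.

End TwoBlockAvoider.

Lemma avoider_cases n (s : colored_partition n) : (0 < n)%N -> s \in avoiders n ->
  s.1 = [set [set: 'I_n]] \/
  exists2 k : 'I_n, (0 < k)%N & s = (split_partition n k, threshold_coloring n k).
Proof.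
case: s => P c n_gt0; rewrite inE => /and3P[partP no1121 no1221].
pose x0 : 'I_n := Ordinal n_gt0.
case: (boolP [forall x, pblock P x == pblock P x0]) => [/forallP one_block | ].
  left; apply: eq_partition_pblock partP (partition_set1T x0) _ => x y _ _.
  by rewrite !pblock_set1T eqxx (eqP (one_block x)) (eqP (one_block y)) eqxx.
rewrite negb_forall => /existsP[u /negP/negP ux0]; right.
exact: two_block_avoider_split ux0.
Qed.

Definition one_block_avoiders n : {set colored_partition n} :=
  [set ([set [set: 'I_n]], c) | c : {ffun 'I_n -> 'I_2}].

Definition split_avoiders n : {set colored_partition n} :=
  [set (split_partition n k, threshold_coloring n k) | k : 'I_n & (0 < k)%N].

Lemma avoidersE n : (0 < n)%N -> avoiders n = one_block_avoiders n :|: split_avoiders n.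
Proof.
move=> n_gt0; apply/setP => s; rewrite in_setU; apply/idP/orP.
  case/(avoider_cases n_gt0) => [s1 | [k k_gt0 ->]].
    by left; apply/imsetP; exists s.2 => //; case: s s1 => P c /= ->.
  by right; apply/imsetP; exists k; rewrite ?inE.
by case=> /imsetP[x _ ->]; [apply: (one_block_avoider _ (Ordinal n_gt0)) | apply: split_avoider].
Qed.

Lemma disjoint_one_block_split n : [disjoint one_block_avoiders n & split_avoiders n].
Proof.
rewrite -setI_eq0; apply/set0Pn => -[s /setIP[/imsetP[c _ ->]]].
case/imsetP => k; rewrite inE => k_gt0 [split_one _].
pose x0 : 'I_n := Ordinal (ltn_trans k_gt0 (ltn_ord k)).
have := pblock_preim_partition (threshold_coloring n k) (in_setT x0) (in_setT k).
by rewrite -/(split_partition n k) -split_one !pblock_set1T eqxx !ffunE k_gt0 ltnn.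
Qed.

Lemma card_one_block_avoiders n : #|one_block_avoiders n| = 2 ^ n.
Proof. by rewrite card_imset ?card_ffun ?card_ord // => a b []. Qed.

Lemma card_split_avoiders n : #|split_avoiders n| = n.-1.
Proof.
rewrite card_imset; last by move=> a b [] _ /threshold_coloring_inj.
case: n => [|n]; first by apply/eqP; rewrite cards_eq0; apply/eqP/setP => -[].
have -> : [set k : 'I_n.+1 | (0 < k)%N] = [set~ ord0].
  by apply/setP => k; rewrite !inE -val_eqE /= lt0n.
by rewrite cardsC1 card_ord.
Qed.

Theorem mainTheorem2 (n : nat) : (1 <= n)%N ->
  #|avoiders n| = (2 ^ n + n - 1)%N.
Proof.
move=> n_gt0.
rewrite avoidersE // cardsU (disjoint_setI0 (disjoint_one_block_split n)) cards0.
rewrite card_one_block_avoiders card_split_avoiders.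
have := expn_gt0 2 n; lia.
Qed.
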